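(* Consider the pointer procedure described in the context, started with $P_0=22$ and all other pointers uninitiated, and let $R_0=22$ and, for $j\ge1$, let $R_j$ be the content of $P_0$ immediately after the $j$-th call of $\mathrm{Inc}(0)$ has finished. Then the infinite concatenation $R_0R_1R_2\cdots$ equals $K'$, i.e. the sequence $(K_{n+1})_{n\ge1}$ obtained from the classical Kolakoski sequence $K$ by deleting its first symbol.
   Context: $K=(K_n)_{n\ge1}$ denotes the classical Kolakoski sequence: the unique infinite sequence over $\{1,2\}$ with $K_1=1$ whose sequence of run lengths equals $K$ itself. $K'$ is defined by $K=1K'$. Pointer procedure: there are pointers $P_0,P_1,P_2,\dots$; each is either uninitiated or holds a word from $S=\{1,2,11,22\}$. The recursive procedure $\mathrm{Inc}(k)$ acts as follows. (i) If $P_k$ is uninitiated, set $P_k:=22$. (ii) If $k\ge1$ and $P_k$ holds two symbols ($11$ or $22$), delete one symbol (so $11\mapsto1$, $22\mapsto2$) and stop. (iii) Otherwise (i.e. $k=0$, or $k\ge1$ and $P_k$ holds a single symbol), call $\mathrm{Inc}(k+1)$; afterwards let $\ell$ be the first symbol of the word held by $P_{k+1}$ (which is not modified here), let $a$ be the symbol occurring in the word held by $P_k$ before this step, and set $P_k:=\bar a^{\,\ell}$, the word consisting of $\ell$ copies of the symbol $\bar a$, where $\bar1=2$, $\bar2=1$. Initially $P_0=22$ and all $P_k$, $k\ge1$, are uninitiated; $\mathrm{Inc}(0)$ is then called repeatedly. *)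

From mathcomp Require Import all_boot.
Set Implicit Arguments. Unset Strict Implicit. Unset Printing Implicit Defensive.

(** Symbols are the naturals 1 and 2; words are [seq nat]. *)
Definition flip (a : nat) : nat := 3 - a.

(** Kolakoski sequence, 1-indexed ([K 0] is irrelevant).  "The run-length
    sequence of K is K itself, K_1 = 1": K is the concatenation of blocks
    B_1 B_2 ... with B_i = c_i^(K_i), the symbols c_i alternating starting with
    c_1 = K_1 = 1.  Since every K_i >= 1 and consecutive symbols differ, the B_i
    are exactly the maximal runs of K. *)
Definition kol_blocks (K : nat -> nat) (m : nat) : seq nat :=
  flatten [seq nseq (K i) (if odd i then 1 else 2) | i <- iota 1 m].

Definition is_kolakoski (K : nat -> nat) : Prop :=
  K 1 = 1 /\
  (forall n, 1 <= n -> K n \in [:: 1; 2]) /\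
  (forall m p, p < size (kol_blocks K m) -> K p.+1 = nth 0 (kol_blocks K m) p).

(** Pointer state: the list [P_0; P_1; ...; P_L] of initiated pointers;
    pointers with index beyond the list are uninitiated (once a pointer is
    initiated it stays so, and Inc(k+1) is only ever called through Inc(k),
    so initiated pointers always form an initial segment). *)

(** [incS ps] performs Inc(k) for k >= 1, where [ps = [P_k; P_(k+1); ...]]. *)
Fixpoint incS (ps : seq (seq nat)) : seq (seq nat) :=
  match ps with
  | [::] => [:: [:: 2]]            (* (i) P_k := 22, then (ii) delete a symbol *)
  | w :: rest =>
      if size w == 2 then behead w :: rest
      else let r := incS rest in
           nseq (head 0 (head [::] r)) (flip (head 0 w)) :: r
  end.

(** Inc(0) on [ps = [P_0; P_1; ...]]: always case (iii). *)
Definition inc0 (ps : seq (seq nat)) : seq (seq nat) :=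
  let: (w, rest) := match ps with
                    | [::] => ([:: 2; 2], [::])
                    | w :: rest => (w, rest)
                    end in
  let r := incS rest in
  nseq (head 0 (head [::] r)) (flip (head 0 w)) :: r.

Definition init_state : seq (seq nat) := [:: [:: 2; 2]].

Definition R (j : nat) : seq nat := head [::] (iter j inc0 init_state).

Definition Rcat (m : nat) : seq nat := flatten [seq R j | j <- iota 0 m].

From mathcomp Require Import all_boot zify.
Set Implicit Arguments. Unset Strict Implicit.

(* Write K' = x_0 x_1 x_2 ... (so x_j = K_(j+2)).  Since K' = 2 2 1 1 2 ...
   begins with a run of 2's, K' is the concatenation of the runs
   run j = (sym j)^(x_j), where the symbols sym j = 2, 1, 2, 1, ... alternate:
   K' is self-describing with respect to these runs.  We prove the exact form
   of the pointer state after j calls of Inc(0):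
     P_0 = run j,  P_1 = rest j,  P_2 = rest (owner j),  P_3 = rest (owner
     (owner j)), ...,   down to (excluding) position 0,
   where owner p is the index of the run of K' containing position p and
   rest p is the part of that run from position p to its end.  So P_k (k >= 1)
   keeps track of where pointer k stands in K': reading K' at level k tells
   how long the next run at level k-1 is.  The invariant rests on one
   combinatorial step, [incS_stack]: Inc(1) moves the stack of position p to
   the stack of position p+1.  Hence R_j = run j, so R_0 R_1 ... is K'. *)

Definition sym (j : nat) : nat := if odd j then 1 else 2.

Definition run (x : nat -> nat) (j : nat) : seq nat := nseq (x j) (sym j).
Definition runs (x : nat -> nat) (n : nat) : seq nat :=
  flatten [seq run x j | j <- iota 0 n].
Definition len (x : nat -> nat) (n : nat) : nat := size (runs x n).

(* Index of the run containing position p: it increases exactly when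
   position p-1 is the last position of its run. *)
Fixpoint owner (x : nat -> nat) (p : nat) : nat :=
  match p with
  | 0 => 0
  | p'.+1 => let t := owner x p' in if len x t.+1 == p'.+1 then t.+1 else t
  end.

Definition rest (x : nat -> nat) (p : nat) : seq nat :=
  nseq (len x (owner x p).+1 - p) (sym (owner x p)).

(* The contents [P_1; P_2; ...] associated with position p: the rests of
   p, owner p, owner (owner p), ..., stopping at position 0.  The fuel n
   is irrelevant once n >= p (see [stack_cons]), since owner p < p. *)
Fixpoint stack_fuel (x : nat -> nat) (n p : nat) : seq (seq nat) :=
  match n with
  | 0 => [::]
  | n'.+1 => if p == 0 then [::] else rest x p :: stack_fuel x n' (owner x p)
  end.
Definition stack (x : nat -> nat) (p : nat) : seq (seq nat) := stack_fuel x p p.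

Lemma sym_flip (t : nat) : flip (sym t) = sym t.+1.
Proof. by rewrite /sym /flip /=; case: (odd t). Qed.

Lemma runsS (x : nat -> nat) (n : nat) : runs x n.+1 = runs x n ++ run x n.
Proof. by rewrite /runs -addn1 iotaD map_cat flatten_cat /= cats0. Qed.

Lemma lenS (x : nat -> nat) (n : nat) : len x n.+1 = len x n + x n.
Proof. by rewrite /len runsS size_cat size_nseq. Qed.

Lemma rest_next (x : nat -> nat) (p : nat) :
  len x (owner x p).+1 = p.+1 ->
  owner x p.+1 = (owner x p).+1 /\ rest x p.+1 = run x (owner x p).+1.
Proof.
move=> Hend; have Eo : owner x p.+1 = (owner x p).+1 by rewrite /= Hend eqxx.
split=> //; rewrite /rest Eo lenS Hend /run; congr nseq; lia.
Qed.

Lemma rest_within (x : nat -> nat) (p : nat) :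
  len x (owner x p).+1 != p.+1 ->
  owner x p.+1 = owner x p /\ rest x p.+1 = behead (rest x p).
Proof.
move=> Hin; have Eo : owner x p.+1 = owner x p by rewrite /= (negbTE Hin).
by split=> //; rewrite /rest Eo subnS; case: (_ - p).
Qed.

Section SelfDescribing.

Variable x : nat -> nat.
Hypothesis x_pos : forall j, 0 < x j.
Hypothesis x_le2 : forall j, x j <= 2.
Hypothesis x_self : forall n p, p < len x n -> nth 0 (runs x n) p = x p.

Lemma owner_bounds (p : nat) : len x (owner x p) <= p < len x (owner x p).+1.
Proof.
elim: p => [|p IH] /=; first by rewrite lenS x_pos.
case: eqP => Hend; last by move: IH Hend; lia.
by have := lenS x (owner x p).+1; have := x_pos (owner x p).+1; lia.
Qed.

(* x starts with 2: its first symbol is the symbol sym 0 = 2 of its first run. *)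
Lemma x0_eq2 : x 0 = 2.
Proof.
have := @x_self 1 0; rewrite /len /runs /= /run cats0 size_nseq.
by case: (x 0) (x_pos 0) => [|k] //= _ /(_ isT).
Qed.

(* The first t+1 runs cover at least t+2 positions (the first run has two). *)
Lemma len_lower (t : nat) : t.+2 <= len x t.+1.
Proof.
elim: t => [|t IH]; first by rewrite lenS x0_eq2.
by rewrite lenS; have := x_pos t.+1; lia.
Qed.

(* Hence the run index of a positive position is smaller than the position;
   this makes the stacks finite and drives the induction in [incS_stack]. *)
Lemma owner_lt (p : nat) : 0 < p -> owner x p < p.
Proof.
move=> Hp; have := owner_bounds p.
case: (owner x p) => [|t] //; have := len_lower t; lia.
Qed.

Lemma x_sym (p : nat) : x p = sym (owner x p).
Proof.
have /andP[Hlo Hhi] := owner_bounds p.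
rewrite -(x_self Hhi) runsS nth_cat -/(len x _) ltnNge Hlo /= /run nth_nseq.
by rewrite lenS in Hhi; rewrite ifT //; lia.
Qed.

Lemma head_rest (p : nat) : head 0 (rest x p) = x p.
Proof.
have /andP[_ Hhi] := owner_bounds p; rewrite -subn_gt0 in Hhi.
by rewrite /rest x_sym; case: (_ - p) Hhi.
Qed.

Lemma size_rest (p : nat) :
  size (rest x p) = if len x (owner x p).+1 == p.+1 then 1 else 2.
Proof.
have /andP[Hlo Hhi] := owner_bounds p; have := x_le2 (owner x p).
by rewrite /rest size_nseq; rewrite lenS in Hhi *; case: eqP; lia.
Qed.

Lemma stack_fuel_enough (n m p : nat) :
  p <= n -> p <= m -> stack_fuel x n p = stack_fuel x m p.
Proof.
elim: n m p => [|n IH] [|m] p Hn Hm //=; try by have -> : p = 0 by lia.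
case: eqP => // /eqP; rewrite -lt0n => Hp.
by rewrite (IH m) //; have := owner_lt Hp; lia.
Qed.

Lemma stack_cons (p : nat) : 0 < p -> stack x p = rest x p :: stack x (owner x p).
Proof.
case: p => [|p] // _; have := owner_lt (ltn0Sn p).
by rewrite /stack /= => Hlt; rewrite (stack_fuel_enough (m := owner x p.+1)) //; lia.
Qed.

(* The key step: Inc(1) turns the stack of position p into that of p+1.
   Inside a run P_1 just loses a symbol; at the end of a run t, Inc(2) is
   performed recursively (moving position t to t+1 at the level above) and
   P_1 becomes run t+1, whose length x_(t+1) is the first symbol of the new P_2. *)
Lemma incS_stack (p : nat) : incS (stack x p) = stack x p.+1.
Proof.
elim/ltn_ind: p => -[_|p IH].
  have Eo : owner x 1 = 0 by have := owner_lt (ltn0Sn 0); lia.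
  by rewrite (stack_cons (ltn0Sn 0)) /rest Eo lenS /= x0_eq2.
rewrite (stack_cons (ltn0Sn p)) (stack_cons (ltn0Sn p.+1)).
set t := owner x p.+1; rewrite [incS _]/= size_rest -/t.
case: (eqVneq (len x t.+1) p.+2) => Hend.
  have [Eo Er] := rest_next Hend; rewrite -/t in Eo Er.
  have Ht : t < p.+1 by exact: owner_lt.
  rewrite Eo Er (IH t Ht) (stack_cons (ltn0Sn t)) /=.
  by rewrite !head_rest (x_sym p.+1) sym_flip.
by have [-> ->] := rest_within Hend.
Qed.

Lemma state_after (j : nat) : iter j inc0 init_state = run x j :: stack x j.
Proof.
elim: j => [|j IH]; first by rewrite /= /run x0_eq2.
rewrite iterS IH /inc0 incS_stack (stack_cons (ltn0Sn j)) /= head_rest /run.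
by case: (x j) (x_pos j) => [|k] //= _; rewrite sym_flip.
Qed.

Lemma Rcat_runs (m : nat) : Rcat m = runs x m.
Proof.
by rewrite /Rcat /runs; congr flatten; apply: eq_map => j; rewrite /R state_after.
Qed.

End SelfDescribing.

Lemma kol_blocks_runs (K : nat -> nat) (n : nat) :
  kol_blocks K n.+1 = nseq (K 1) 1 ++ runs (fun j => K j.+2) n.
Proof.
rewrite /kol_blocks /runs /= -[2]/(2 + 0) iotaDl -map_comp; congr (_ ++ flatten _).
by apply: eq_map => j; rewrite /run /sym /= negbK.
Qed.

Lemma kolakoski_shift (K : nat -> nat) : is_kolakoski K ->
  [/\ forall j, 0 < K j.+2, forall j, K j.+2 <= 2 &
      forall n p, p < len (fun j => K j.+2) n ->
        nth 0 (runs (fun j => K j.+2) n) p = K p.+2].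
Proof.
case=> [K1 [K12 Kb]].
have K12' j : 0 < K j.+2 <= 2 by have := K12 j.+2 isT; rewrite !inE => /orP[] /eqP ->.
split=> [j|j|n p Hp]; try by case/andP: (K12' j).
by have := Kb n.+1 p.+1; rewrite kol_blocks_runs K1 /= => ->.
Qed.

Theorem mainTheorem3 (K : nat -> nat) (HK : is_kolakoski K) :
  forall i : nat, exists m : nat,
    i < size (Rcat m) /\ nth 0 (Rcat m) i = K i.+2.
Proof.
have [x_pos x_le2 x_self] := kolakoski_shift HK.
move=> i; exists i.+1; rewrite (Rcat_runs x_pos x_le2 x_self).
have Hi : i < len (fun j => K j.+2) i.+1 by have := len_lower x_pos x_self i; lia.
by split; [exact: Hi | exact: x_self].
Qed.
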